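(* Let $N$ be a natural number, $P=\{a\subseteq N: |a|\geq 2\}$, and let $\|\cdot\|_3$ be the graph coloring norm on subsets of $P$ (defined in the context). Let $n$ be a natural number and $A\subseteq P$. If $A$ can be split by $2^n$ sets, then $\|A\|_3\leq n$.
   Context: $N=\{0,\ldots,N-1\}$. For $A\subseteq P$ and $z\subseteq N$ let $A\restriction z=\{a\in A: a\subseteq z\}$. The relation ''$\|A\|_3\geq m$'' is defined recursively: $\|A\|_3\geq 0$ always; $\|A\|_3\geq 1$ iff $A\neq\emptyset$; for $m\geq 1$, $\|A\|_3\geq m+1$ iff for every $z\subseteq N$ either $\|A\restriction z\|_3\geq m$ or $\|A\restriction(N\setminus z)\|_3\geq m$. Then $\|A\|_3$ is the largest $m$ with $\|A\|_3\geq m$. $A$ is split by sets $V_0,\ldots,V_{c-1}$ (pairwise disjoint, possibly empty, with union $N$) if $A\restriction V_j=\emptyset$ for every $j<c$; $A$ can be split by $c$ sets if such a partition of $N$ into $c$ sets exists. *)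

(* N = {0,...,N-1} is 'I_N; subsets of N are {set 'I_N}. *)
From mathcomp Require Import all_boot all_order.
Set Implicit Arguments. Unset Strict Implicit. Unset Printing Implicit Defensive.

Definition Pset (N : nat) : {set {set 'I_N}} := [set a : {set 'I_N} | 2 <= #|a|].

Definition restr (N : nat) (A : {set {set 'I_N}}) (z : {set 'I_N}) : {set {set 'I_N}} :=
  [set a in A | a \subset z].

(* norm3_ge A m  <=>  ||A||_3 >= m, by the recursive definition. *)
Fixpoint norm3_ge (N : nat) (A : {set {set 'I_N}}) (m : nat) {struct m} : bool :=
  match m with
  | 0 => true
  | 1 => A != set0
  | (k.+1 as m').+1 =>
      [forall z : {set 'I_N}, norm3_ge (restr A z) m' || norm3_ge (restr A (~: z)) m']
  end.

Definition norm3_le (N : nat) (A : {set {set 'I_N}}) (n : nat) : Prop :=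
  forall m, norm3_ge A m -> m <= n.

Definition split_by (N c : nat) (A : {set {set 'I_N}}) (V : 'I_c -> {set 'I_N}) : Prop :=
  (forall i j : 'I_c, i != j -> [disjoint V i & V j]) /\
  (\bigcup_(j < c) V j = setT) /\
  (forall j : 'I_c, restr A (V j) = set0).

Definition can_be_split (N : nat) (A : {set {set 'I_N}}) (c : nat) : Prop :=
  exists V : 'I_c -> {set 'I_N}, split_by A V.

From mathcomp Require Import all_boot all_order.

(* If the sets V_j (j < 2^(n+1)) cover N and none contains a member of A,
   let z be the union of the first 2^n of them.  The sets V_j :|: ~: z of
   the first half cover N and contain no member of restr A z, and
   symmetrically the sets V_j :|: z of the second half do so for
   restr A (~: z).  By induction neither restriction has norm above n, so z
   witnesses that ||A||_3 >= n+2 fails. *)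

Set Implicit Arguments.
Unset Strict Implicit.
Unset Printing Implicit Defensive.

Section Norm3.

Variable N : nat.
Implicit Types (A : {set {set 'I_N}}) (V z : {set 'I_N}) (s : seq {set 'I_N}).

Lemma restrT A : restr A setT = A.
Proof. by apply/setP=> a; rewrite inE subsetT andbT. Qed.

Lemma norm3_geSS A m :
  norm3_ge A m.+2 =
  [forall z, norm3_ge (restr A z) m.+1 || norm3_ge (restr A (~: z)) m.+1].
Proof. by []. Qed.

Lemma norm3_geSn A m : norm3_ge A m.+1 -> norm3_ge A m.
Proof.
elim: m A => [|[|m] IHm] A //.
- rewrite /= => /forallP/(_ setT); rewrite restrT => /orP[// | /set0Pn[a]].
  by rewrite inE => /andP[aA _]; apply/set0Pn; exists a.
- rewrite !norm3_geSS => /forallP restr_ge; apply/forallP=> z.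
  by case/orP: (restr_ge z) => /IHm ->; rewrite ?orbT.
Qed.

Lemma norm3_ge_leq A k m : k <= m -> norm3_ge A m -> norm3_ge A k.
Proof.
move=> /subnK <-; elim: (m - k) => [//|d IHd].
by rewrite addSn => /norm3_geSn/IHd.
Qed.

Lemma norm3_le_of_not_ge A n : ~~ norm3_ge A n.+1 -> norm3_le A n.
Proof.
move=> not_ge m ge_m; rewrite leqNgt; apply: contra not_ge => lt_nm.
exact: norm3_ge_leq ge_m.
Qed.

Definition independent A V : bool := restr A V == set0.

Definition independent_cover A s : Prop :=
  \bigcup_(V <- s) V = setT /\ all (independent A) s.

Lemma independent_restr A V z :
  independent A V -> independent (restr A z) (V :|: ~: z).
Proof.
move/eqP/setP=> restrV; apply/eqP/setP=> a; rewrite !inE -andbA.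
apply/negbTE/and3P=> -[aA az aVz]; move: (restrV a); rewrite !inE aA /=.
suff -> : a \subset V by [].
apply/subsetP=> x ax; move/subsetP/(_ x ax): aVz.
by rewrite !inE (subsetP az x ax) orbF.
Qed.

Lemma independent_cover_restr A s z :
  s != [::] -> z \subset \bigcup_(V <- s) V -> all (independent A) s ->
  independent_cover (restr A z) [seq V :|: ~: z | V <- s].
Proof.
case: s => [//|V0 s] _; rewrite bigcup_seq => z_sub indep; split.
- apply/setP=> x; rewrite inE big_map bigcup_seq; apply/bigcupP.
  have [xz | xNz] := boolP (x \in z).
    have /bigcupP[V Vs xV] := subsetP z_sub x xz.
    by exists V; rewrite // inE xV.
  by exists V0; rewrite ?mem_head // !inE xNz orbT.
- rewrite all_map; apply/allP=> V Vs.
  exact: independent_restr (allP indep V Vs).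
Qed.

Lemma independent_cover_norm3 n A s :
  independent_cover A s -> size s = 2 ^ n -> ~~ norm3_ge A n.+1.
Proof.
elim: n A s => [|n IHn] A s [cover indep] size_s.
  case: s size_s cover indep => [|V []] //= _.
  by rewrite big_seq1 andbT /independent negbK => ->; rewrite restrT => ->.
have size_s2 : size s = 2 ^ n + 2 ^ n by rewrite size_s expnS mul2n addnn.
have size_half : size (take (2 ^ n) s) = 2 ^ n.
  by rewrite size_take size_s2 -[X in X < _]addn0 ltn_add2l expn_gt0.
have size_rest : size (drop (2 ^ n) s) = 2 ^ n.
  by rewrite size_drop size_s2 addnK.
have nonempty (t : seq {set 'I_N}) : size t = 2 ^ n -> t != [::].
  by move=> size_t; rewrite -size_eq0 size_t expn_eq0.
have [indep1 indep2] : all (independent A) (take (2 ^ n) s) /\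
                       all (independent A) (drop (2 ^ n) s).
  by apply/andP; rewrite -all_cat cat_take_drop.
set z := \bigcup_(V <- take (2 ^ n) s) V.
have rest_cover : ~: z \subset \bigcup_(V <- drop (2 ^ n) s) V.
  apply/subsetP=> x; rewrite inE => xNz.
  have : x \in z :|: \bigcup_(V <- drop (2 ^ n) s) V.
    by rewrite /z -big_cat cat_take_drop cover inE.
  by rewrite inE (negbTE xNz).
rewrite norm3_geSS negb_forall; apply/existsP; exists z.
rewrite negb_or; apply/andP; split.
- have := independent_cover_restr (nonempty _ size_half) (subxx z) indep1.
  by move/IHn; apply; rewrite size_map.
- have := independent_cover_restr (nonempty _ size_rest) rest_cover indep2.
  by move/IHn; apply; rewrite size_map.
Qed.

End Norm3.

Theorem theorem5p10 (N n : nat) (A : {set {set 'I_N}}) :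
  A \subset Pset N -> can_be_split A (2 ^ n) -> norm3_le A n.
Proof.
move=> _ [V [_ [cover empty_restr]]]; apply: norm3_le_of_not_ge.
apply: (@independent_cover_norm3 _ n A [seq V j | j <- enum 'I_(2 ^ n)]).
- split; first by rewrite big_map big_enum.
  by rewrite all_map; apply/allP=> j _; rewrite /= /independent empty_restr.
- by rewrite size_map size_enum_ord.
Qed.
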